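(* Let $\nu_n(x_0,x_1)$ ($n\ge 0$) be any nonvanishing functions and $\bar P_n(x;x_0,x_1)=\nu_n(x_0,x_1)P_n(x;x_0,x_1)$. Then for all $n\ge1$: $$\mathcal{A}_2\bar P_n=\frac{\mathrm{i}\,q^{-\frac14}}{1-x_0^2}\Bigg\{x_0^2\frac{\nu_n(q^{-\frac12}x_0,x_1)}{\nu_{n+1}(x_0,x_1)}\bar P_{n+1}-\frac{\nu_n(q^{\frac12}x_0,x_1)}{\nu_{n-1}(x_0,x_1)}\lambda_n(x_0,x_1)\bar P_{n-1}+\left(x_0^2\frac{\gamma_n(q^{-\frac12}x_0,x_1)}{\lambda_n(q^{-\frac12}x_0,x_1)}\frac{\nu_n(q^{-\frac12}x_0,x_1)}{\nu_n(x_0,x_1)}-\frac{\nu_n(q^{\frac12}x_0,x_1)}{\nu_n(x_0,x_1)}\right)\bar P_n\Bigg\},$$ $$\mathcal{A}_4\bar P_n=\frac{\mathrm{i}\,q^{-\frac14}}{1-x_1^2}\Bigg\{x_1^2\frac{\nu_n(x_0,q^{-\frac12}x_1)}{\nu_{n+1}(x_0,x_1)}\bar P_{n+1}-\frac{\nu_n(x_0,q^{\frac12}x_1)}{\nu_{n-1}(x_0,x_1)}\lambda_n(x_1,x_0)\bar P_{n-1}+\left(x_1^2\frac{\gamma_n(x_0,q^{-\frac12}x_1)}{\lambda_n(q^{-\frac12}x_1,x_0)}\frac{\nu_n(x_0,q^{-\frac12}x_1)}{\nu_n(x_0,x_1)}-\frac{\nu_n(x_0,q^{\frac12}x_1)}{\nu_n(x_0,x_1)}\right)\bar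 P_n\Bigg\},$$ where on the right-hand sides $\bar P_m=\bar P_m(x;x_0,x_1)$.
   Context: Let $q$ be a complex parameter with $0<|q|<1$, with a fixed choice of $q^{1/4}$ and $q^{k/4}:=(q^{1/4})^k$; $x,x_0,x_1$ are variables; $\mathrm{i}=\sqrt{-1}$. Notation: $(y)_n=(y;q)_n=\prod_{i=1}^{n}(1-yq^{i-1})$, $(y_1,\dots,y_k)_n=(y_1)_n\cdots(y_k)_n$. Operators on functions $f(x,x_0,x_1)$: $\eth_0 f(x,x_0,x_1)=f(x,q^{1/2}x_0,x_1)$, $\eth_1 f(x,x_0,x_1)=f(x,x_0,q^{1/2}x_1)$, with inverses defined accordingly; a function written to the left of an operator acts by multiplication after the operator is applied. For $n\ge0$, $$P_n(x;x_0,x_1)=(-1)^nq^{-\frac n2}\frac{\left(q,\frac{q}{x_0^2},\frac{q}{x_1^2}\right)_n}{\left(\frac{q^{n+1}}{x_0^2x_1^2}\right)_n}\sum_{k=0}^{n}q^k\frac{\left(q^{-n},\frac{q^{n+1}}{x_0^2x_1^2}\right)_k}{\left(q,q,\frac{q}{x_0^2},\frac{q}{x_1^2}\right)_k}\left(-q^{\frac12}x,-q^{\frac12}x^{-1}\right)_k$$ (the Askey–Wilson polynomial with parameters $(a,b,c,d)=(-q^{1/2},-q^{1/2},-q^{1/2}/x_0^2,-q^{1/2}/x_1^2)$). For $b\in\{0,1\}$ let $$G_0(x_b;x)=-\frac{1}{1-x_b^2}\eth_b+\frac{(q^{\frac12}x+x_b^2)(q^{\frac12}+x\,x_b^2)}{q^{\frac12}x(1-x_b^2)}\eth_b^{-1},$$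 and $\mathcal{A}_2=\mathrm{i}\,q^{-1/4}G_0(x_0;x)$, $\mathcal{A}_4=\mathrm{i}\,q^{-1/4}G_0(x_1;x)$ (images of the curves $\mathbb{k}_2,\mathbb{k}_4$ of the genus-two skein algebra). Further, $$\gamma_n(x_0,x_1)=\frac{(1-q^n)^2\left(1-\frac{q^n}{x_0^2x_1^2}\right)^2\left(1-\frac{q^n}{x_0^2}\right)^2\left(1-\frac{q^n}{x_1^2}\right)^2}{\left(1-\frac{q^{2n-1}}{x_0^2x_1^2}\right)\left(1-\frac{q^{2n}}{x_0^2x_1^2}\right)^2\left(1-\frac{q^{2n+1}}{x_0^2x_1^2}\right)},\qquad \lambda_n(x_0,x_1)=\frac{q^{-\frac12}(1-q^n)^2\left(1-\frac{q^n}{x_1^2}\right)^2}{x_0^2\left(1-\frac{q^{2n-1}}{x_0^2x_1^2}\right)\left(1-\frac{q^{2n}}{x_0^2x_1^2}\right)}.$$ *)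

From mathcomp Require Import all_boot all_order all_algebra.
From mathcomp Require Import complex reals.
Set Implicit Arguments. Unset Strict Implicit. Unset Printing Implicit Defensive.
Import Order.TTheory GRing.Theory Num.Theory.
Local Open Scope ring_scope.

(* Throughout, t plays the role of the fixed choice q^{1/4}; so q = t^4,
   q^{1/2} = t^2, q^{-1/2} = t^-2, q^{-1/4} = t^-1, q^{k/4} = t^k. *)

Section Defs.
Variable R : realType.
Local Notation C := R[i].
Variable t : C.

Definition qq : C := t ^+ 4.

Definition qpoch (y : C) (n : nat) : C := \prod_(i < n) (1 - y * qq ^+ i).

Definition Pn (n : nat) (x x0 x1 : C) : C :=
  (-1) ^+ n * t ^- (2 * n)
  * (qpoch qq n * qpoch (qq / x0 ^+ 2) n * qpoch (qq / x1 ^+ 2) n)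
    / qpoch (qq ^+ n.+1 / (x0 ^+ 2 * x1 ^+ 2)) n
  * \sum_(k < n.+1)
      qq ^+ k
      * (qpoch (qq ^- n) k * qpoch (qq ^+ n.+1 / (x0 ^+ 2 * x1 ^+ 2)) k)
        / (qpoch qq k * qpoch qq k * qpoch (qq / x0 ^+ 2) k * qpoch (qq / x1 ^+ 2) k)
      * (qpoch (- (t ^+ 2 * x)) k * qpoch (- (t ^+ 2 / x)) k).

Definition gam (n : nat) (x0 x1 : C) : C :=
  ((1 - qq ^+ n) ^+ 2 * (1 - qq ^+ n / (x0 ^+ 2 * x1 ^+ 2)) ^+ 2
     * (1 - qq ^+ n / x0 ^+ 2) ^+ 2 * (1 - qq ^+ n / x1 ^+ 2) ^+ 2)
  / ((1 - qq ^+ (2 * n).-1 / (x0 ^+ 2 * x1 ^+ 2))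
     * (1 - qq ^+ (2 * n) / (x0 ^+ 2 * x1 ^+ 2)) ^+ 2
     * (1 - qq ^+ (2 * n).+1 / (x0 ^+ 2 * x1 ^+ 2))).

Definition lam (n : nat) (x0 x1 : C) : C :=
  (t ^- 2 * (1 - qq ^+ n) ^+ 2 * (1 - qq ^+ n / x1 ^+ 2) ^+ 2)
  / (x0 ^+ 2 * (1 - qq ^+ (2 * n).-1 / (x0 ^+ 2 * x1 ^+ 2))
     * (1 - qq ^+ (2 * n) / (x0 ^+ 2 * x1 ^+ 2))).

Definition fn3 := C -> C -> C -> C.

Definition eth (b : bool) (f : fn3) : fn3 := fun x x0 x1 =>
  if b then f x x0 (t ^+ 2 * x1) else f x (t ^+ 2 * x0) x1.
Definition ethinv (b : bool) (f : fn3) : fn3 := fun x x0 x1 =>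
  if b then f x x0 (t ^- 2 * x1) else f x (t ^- 2 * x0) x1.

Definition G0 (b : bool) (f : fn3) : fn3 := fun x x0 x1 =>
  let xb := if b then x1 else x0 in
  - (1 - xb ^+ 2)^-1 * eth b f x x0 x1
  + ((t ^+ 2 * x + xb ^+ 2) * (t ^+ 2 + x * xb ^+ 2))
      / (t ^+ 2 * x * (1 - xb ^+ 2)) * ethinv b f x x0 x1.

Definition A2 (f : fn3) : fn3 := fun x x0 x1 => 'i%C * t ^-1 * G0 false f x x0 x1.
Definition A4 (f : fn3) : fn3 := fun x x0 x1 => 'i%C * t ^-1 * G0 true f x x0 x1.

Definition Pbar (nu : nat -> C -> C -> C) (n : nat) : fn3 := fun x x0 x1 =>
  nu n x0 x1 * Pn n x x0 x1.

Definition generic (x0 x1 : C) : Prop :=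
  forall j : int, x0 ^+ 2 != qq ^ j /\ x1 ^+ 2 != qq ^ j /\ x0 ^+ 2 * x1 ^+ 2 != qq ^ j.

End Defs.

(* Write [P_n = sum_k c_{n,k}(x0^2, x1^2) phi_k(x)] with
   [phi_k(x) = (-q^{1/2} x, -q^{1/2}/x; q)_k].  The operator [A2] only sees [P_n] at
   [q^{1/2} x0] and [q^{-1/2} x0], and two contiguity relations handle these:
   [P_n(q^{1/2} x0) = P_n + lambda_n P_{n-1}], and, since the coefficient of the
   lowering term of [G_0] maps [phi_k] to a combination of [phi_k] and [phi_{k+1}],
   a three-term relation expressing that term of [P_n(q^{-1/2} x0)] through
   [P_{n+1}] and [P_n].  Both are checked coefficientwise: the explicit ratios for
   [a -> q a], [k -> k+1] and [n -> n+1] reduce every coefficient involved to a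
   single one, leaving rational identities.  [A4] follows from [A2] because [P_n]
   is symmetric in [x0, x1]. *)

From mathcomp Require Import all_boot all_order all_algebra.
From mathcomp Require Import complex reals.
From mathcomp Require Import ring zify.
Set Implicit Arguments. Unset Strict Implicit. Unset Printing Implicit Defensive.
Import Order.TTheory GRing.Theory Num.Theory.
Local Open Scope ring_scope.

Lemma sum_shift_combine (V : pzSemiRingType) N (F G H f : nat -> V) :
  F 0%N = H 0%N -> (forall k, F k.+1 + G k = H k.+1) -> G N = 0 ->
  \sum_(k < N.+1) F k * f k + \sum_(k < N.+1) G k * f k.+1 = \sum_(k < N.+1) H k * f k.
Proof.
move=> FH0 FGH GN0.
rewrite big_ord_recl [X in _ + X]big_ord_recr [RHS]big_ord_recl /= GN0 mul0r addr0 FH0.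
rewrite -addrA -big_split; congr (_ + _); apply: eq_bigr => i _ /=.
by rewrite -mulrDl FGH.
Qed.

Section AskeyWilson.
Variable R : realType.
Local Notation C := R[i].
Variable t : C.
Hypothesis ht : 0 < `|t ^+ 4| < 1.

Local Notation q := (qq t).
Local Notation qpoch := (qpoch t).

Lemma qq_neq0 : q != 0.
Proof. by case/andP: ht; rewrite normr_gt0. Qed.

Lemma t_neq0 : t != 0.
Proof. by apply: contra_neq qq_neq0 => ->; rewrite /qq expr0n. Qed.

Lemma onem_qqX_neq0 N : (0 < N)%N -> 1 - q ^+ N != 0.
Proof.
move=> N_gt0; rewrite subr_eq0; apply/eqP => q1.
have : `|q ^+ N| < 1 by rewrite normrX exprn_ilt1 // -?lt0n; case/andP: ht.
by rewrite -q1 normr1 ltxx.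
Qed.

Lemma onem_qqVX_neq0 N : (0 < N)%N -> 1 - q ^- N != 0.
Proof.
move=> N_gt0; have qN : q ^+ N != 0 by rewrite expf_neq0 ?qq_neq0.
have -> : 1 - q ^- N = - (1 - q ^+ N) / q ^+ N by field.
by rewrite mulf_neq0 ?invr_eq0 ?oppr_eq0 ?onem_qqX_neq0.
Qed.

Lemma qpochS y k : qpoch y k.+1 = qpoch y k * (1 - y * q ^+ k).
Proof. by rewrite /qpoch big_ord_recr. Qed.

Lemma qpochSl y k : qpoch y k.+1 = (1 - y) * qpoch (y * q) k.
Proof.
rewrite /qpoch big_ord_recl /= expr0 mulr1; congr (_ * _).
by apply: eq_bigr => i _; rewrite /bump /= exprS mulrA.
Qed.

Lemma qpoch_neq0 y k :
  (forall i, (i < k)%N -> 1 - y * q ^+ i != 0) -> qpoch y k != 0.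
Proof. by move=> y_ok; apply/prodf_neq0 => i _; apply: y_ok. Qed.

Lemma qpoch_qqVX_eq0 n k : (n < k)%N -> qpoch (q ^- n) k = 0.
Proof.
move=> lt_nk; rewrite /qpoch (bigD1 (Ordinal lt_nk)) //=.
by rewrite mulVf ?subrr ?mul0r // expf_neq0 ?qq_neq0.
Qed.

Lemma qpoch_shift k y z : z = y * q ->
  qpoch y k * (1 - y * q ^+ k) = (1 - y) * qpoch z k.
Proof. by move->; rewrite -qpochS qpochSl. Qed.

Lemma qpoch_up k y z : z = y * q -> 1 - y != 0 ->
  qpoch z k = qpoch y k * (1 - y * q ^+ k) / (1 - y).
Proof. by move=> /(qpoch_shift k) -> y1; rewrite mulrC mulrA mulVf ?mul1r. Qed.

Lemma qpoch_down k y z : z = y * q -> 1 - y * q ^+ k != 0 ->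
  qpoch y k = (1 - y) * qpoch z k / (1 - y * q ^+ k).
Proof. by move=> /(qpoch_shift k) <- yk; rewrite mulfK. Qed.

Lemma qpoch_qq_neq0 k : qpoch q k != 0.
Proof. by apply: qpoch_neq0 => i _; rewrite -exprS onem_qqX_neq0. Qed.

Lemma onem_qqX_div_neq0 c N : c != 0 -> c != q ^+ N -> 1 - q ^+ N / c != 0.
Proof.
move=> c0 cN; rewrite -(divff c0) -mulrBl mulf_neq0 ?invr_eq0 //.
by rewrite subr_eq0.
Qed.

Lemma qpoch_qqX_div_neq0 c M k :
  c != 0 -> (forall N, c != q ^+ N) -> qpoch (q ^+ M / c) k != 0.
Proof.
move=> c0 cN; apply: qpoch_neq0 => i _.
by rewrite mulrAC -exprD onem_qqX_div_neq0.
Qed.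

Definition aw_basis k x := qpoch (- (t ^+ 2 * x)) k * qpoch (- (t ^+ 2 / x)) k.

(* The coefficients of [Pn] in the basis [aw_basis]; [a] and [b] stand for [x0^2] and [x1^2]. *)
Definition aw_coef n k a b :=
  (-1) ^+ n * t ^- (2 * n)
  * (qpoch q n * qpoch (q / a) n * qpoch (q / b) n) / qpoch (q ^+ n.+1 / (a * b)) n
  * (q ^+ k * (qpoch (q ^- n) k * qpoch (q ^+ n.+1 / (a * b)) k)
     / (qpoch q k * qpoch q k * qpoch (q / a) k * qpoch (q / b) k)).

Lemma PnE n x x0 x1 :
  Pn t n x x0 x1 = \sum_(k < n.+1) aw_coef n k (x0 ^+ 2) (x1 ^+ 2) * aw_basis k x.
Proof. by rewrite /Pn big_distrr; apply: eq_bigr => k _; exact: mulrA. Qed.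

Lemma aw_coef_eq0 n k a b : (n < k)%N -> aw_coef n k a b = 0.
Proof. by move=> lt_nk; rewrite /aw_coef qpoch_qqVX_eq0 // !(mul0r, mulr0). Qed.

Lemma lamE n x0 x1 :
  lam t n.+1 x0 x1
  = t ^- 2 * (1 - q ^+ n.+1) ^+ 2 * (1 - q ^+ n.+1 / x1 ^+ 2) ^+ 2
    / (x0 ^+ 2 * (1 - q ^+ n.+1 * q ^+ n / (x0 ^+ 2 * x1 ^+ 2))
       * (1 - q ^+ n.+1 * q ^+ n.+1 / (x0 ^+ 2 * x1 ^+ 2))).
Proof.
rewrite /lam; have -> : (2 * n.+1).-1 = (n.+1 + n)%N by lia.
by rewrite mul2n -addnn !exprD.
Qed.

Definition basis_mul_diag (u K : C) :=
  t ^+ 2 + u ^+ 2 / t ^+ 2 - u / (t ^+ 2 * K) - u * t ^+ 2 * K.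
Definition basis_mul_next (u K : C) := u / (t ^+ 2 * K).

Definition qgeneric (a b : C) :=
  forall N : nat, [/\ a != q ^+ N, b != q ^+ N & a * b != q ^+ N].

Lemma qgeneric_sqr x0 x1 : generic t x0 x1 -> qgeneric (x0 ^+ 2) (x1 ^+ 2).
Proof. by move=> gen N; have [? []] := gen N. Qed.

Lemma qgeneric_sym a b : qgeneric a b -> qgeneric b a.
Proof. by move=> gen N; have [? ? ?] := gen N; rewrite mulrC. Qed.

Lemma qgeneric_divq a b : qgeneric a b -> qgeneric (a / q) b.
Proof.
move=> gen N; have [aN _ abN] := gen N.+1; have [_ bN _] := gen N.
by rewrite mulrAC !(can2_eq (divfK qq_neq0) (mulfK qq_neq0)) -exprSr.
Qed.

Section Coefficients.
Variables a b : C.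
Hypotheses (a_neq0 : a != 0) (b_neq0 : b != 0) (ab_gen : qgeneric a b).

Let a_gen N : a != q ^+ N. Proof. by have [] := ab_gen N. Qed.
Let b_gen N : b != q ^+ N. Proof. by have [] := ab_gen N. Qed.
Let ab_gen' N : a * b != q ^+ N. Proof. by have [] := ab_gen N. Qed.
Let ab_neq0 : a * b != 0. Proof. exact: mulf_neq0. Qed.
Let onem_ab N : 1 - q ^+ N / (a * b) != 0. Proof. exact: onem_qqX_div_neq0. Qed.
Let onem_aV N : 1 - a^-1 * q ^+ N != 0. Proof. by rewrite mulrC onem_qqX_div_neq0. Qed.
Let onem_abX N M : 1 - q ^+ N / (a * b) * q ^+ M != 0.
Proof. by rewrite mulrAC -exprD. Qed.
Let a_sub N : a - q ^+ N != 0. Proof. by rewrite subr_eq0. Qed.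
Let b_sub N : b - q ^+ N != 0. Proof. by rewrite subr_eq0. Qed.
Let ab_sub N : a * b - q ^+ N != 0. Proof. by rewrite subr_eq0. Qed.
Let ab_subXX N M : a * b - q ^+ N * q ^+ M != 0. Proof. by rewrite -exprD. Qed.
Let a_sub1 : a - 1 != 0. Proof. exact: a_sub 0. Qed.
Let qpoch_ab M k : qpoch (q ^+ M / (a * b)) k != 0. Proof. exact: qpoch_qqX_div_neq0. Qed.
Let qpoch_qa k : qpoch (q / a) k != 0. Proof. exact: qpoch_qqX_div_neq0 1 k a_neq0 a_gen. Qed.
Let qpoch_qb k : qpoch (q / b) k != 0. Proof. exact: qpoch_qqX_div_neq0 1 k b_neq0 b_gen. Qed.
Let qX_neq0 N : q ^+ N != 0. Proof. by rewrite expf_neq0 ?qq_neq0. Qed.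
Let qX_sub1 N : (0 < N)%N -> q ^+ N - 1 != 0.
Proof. by move=> N_gt0; rewrite -oppr_eq0 opprB onem_qqX_neq0. Qed.
Let tX_neq0 N : t ^+ N != 0. Proof. by rewrite expf_neq0 ?t_neq0. Qed.

Local Ltac nonzero :=
  rewrite -?exprS ?qX_sub1 ?onem_qqX_neq0 // !(ab_subXX, ab_sub, a_sub, b_sub, qpoch_ab,
    qpoch_qa, qpoch_qb, qpoch_qq_neq0, qX_neq0, qq_neq0, tX_neq0, t_neq0, a_neq0, b_neq0, a_sub1).

Lemma aw_coef_qa n k :
  aw_coef n k (q * a) b
  = (1 - q ^+ n * q ^+ n / (a * b)) * (1 - q ^+ k / a)
    / ((1 - q ^+ n / a) * (1 - q ^+ n * q ^+ k / (a * b))) * aw_coef n k a b.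
Proof.
have qa : q / (q * a) = a^-1 by field; rewrite qq_neq0 a_neq0.
have qab : q ^+ n.+1 / (q * a * b) = q ^+ n / (a * b).
  by rewrite exprS; field; rewrite qq_neq0 a_neq0 b_neq0.
rewrite /aw_coef qa qab.
have qabS : q ^+ n.+1 / (a * b) = q ^+ n / (a * b) * q by rewrite exprSr mulrAC.
rewrite !(qpoch_down (mulrC q a^-1)) ?onem_aV //.
rewrite !(qpoch_down qabS) ?onem_abX //.
by field; nonzero.
Qed.

Lemma aw_coef_succ_k n k :
  aw_coef n k.+1 a b
  = q * (1 - q ^- n * q ^+ k) * (1 - q ^+ n.+1 * q ^+ k / (a * b))
    / ((1 - q ^+ k.+1) ^+ 2 * (1 - q ^+ k.+1 / a) * (1 - q ^+ k.+1 / b))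
    * aw_coef n k a b.
Proof.
rewrite /aw_coef !qpochS !exprS.
by field; nonzero.
Qed.

Lemma aw_coef_by_succ_n n k :
  aw_coef n k a b
  = - t ^+ 2 * (1 - q ^- n.+1 * q ^+ k)
      * (1 - q ^+ n.+1 * q ^+ n / (a * b)) * (1 - q ^+ n.+1 * q ^+ n.+1 / (a * b))
    / ((1 - q ^+ n.+1) * (1 - q ^+ n.+1 / a) * (1 - q ^+ n.+1 / b) * (1 - q ^- n.+1)
       * (1 - q ^+ n.+1 * q ^+ k / (a * b)))
    * aw_coef n.+1 k a b.
Proof.
have qVS : q ^- n = q ^- n.+1 * q.
  by rewrite exprS invfM mulrAC mulVf ?qq_neq0 ?mul1r.
have qabS : q ^+ n.+2 / (a * b) = q ^+ n.+1 / (a * b) * q by rewrite exprSr mulrAC.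
rewrite /aw_coef !qpochS (qpoch_up _ qVS) ?onem_qqVX_neq0 //.
rewrite !(qpoch_up _ qabS) ?onem_ab // mulnS exprD !exprS.
by field; nonzero.
Qed.

Lemma aw_coef_raise m k :
  aw_coef m.+1 k (q * a) b
  = aw_coef m.+1 k a b
    + t ^- 2 * (1 - q ^+ m.+1) ^+ 2 * (1 - q ^+ m.+1 / b) ^+ 2
      / (a * (1 - q ^+ m.+1 * q ^+ m / (a * b)) * (1 - q ^+ m.+1 * q ^+ m.+1 / (a * b)))
      * aw_coef m k a b.
Proof.
rewrite aw_coef_qa (aw_coef_by_succ_n m k) !exprS.
by field; nonzero.
Qed.

Lemma gam_div_lam n y z : y ^+ 2 = a -> z ^+ 2 = b ->
  gam t n.+1 y z / lam t n.+1 y z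
  = t ^+ 2 * a * (1 - q ^+ n.+1 / (a * b)) ^+ 2 * (1 - q ^+ n.+1 / a) ^+ 2
    / ((1 - q ^+ n.+1 * q ^+ n.+1 / (a * b)) * (1 - q ^+ n.+2 * q ^+ n.+1 / (a * b))).
Proof.
move=> ya zb; rewrite /gam lamE ya zb.
have -> : (2 * n.+1).-1 = (n.+1 + n)%N by lia.
rewrite mul2n -addnn -addSn !exprD !exprS.
by field; nonzero.
Qed.

Lemma aw_coef_lower n k :
  aw_coef n k.+1 a b * basis_mul_diag (q * a) (q ^+ k.+1)
  + aw_coef n k a b * basis_mul_next (q * a) (q ^+ k)
  = q * a * (aw_coef n.+1 k.+1 (q * a) b
      + t ^+ 2 * a * (1 - q ^+ n / (a * b)) ^+ 2 * (1 - q ^+ n / a) ^+ 2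
        / ((1 - q ^+ n * q ^+ n / (a * b)) * (1 - q ^+ n.+1 * q ^+ n / (a * b)))
        * aw_coef n k.+1 (q * a) b).
Proof.
rewrite !aw_coef_qa !aw_coef_succ_k (aw_coef_by_succ_n n k) /basis_mul_diag /basis_mul_next.
set c := aw_coef n.+1 k a b; rewrite !exprS.
set Q := q ^+ n; set K := q ^+ k.
(* Unlike the ratios above, this identity uses [q = t^4]. *)
rewrite /qq.
by field; rewrite -/(qq t) /Q /K; nonzero.
Qed.

Lemma aw_coef0_lower n :
  aw_coef n 0 a b * basis_mul_diag (q * a) (q ^+ 0)
  = q * a * (aw_coef n.+1 0 (q * a) b
      + t ^+ 2 * a * (1 - q ^+ n / (a * b)) ^+ 2 * (1 - q ^+ n / a) ^+ 2
        / ((1 - q ^+ n * q ^+ n / (a * b)) * (1 - q ^+ n.+1 * q ^+ n / (a * b)))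
        * aw_coef n 0 (q * a) b).
Proof.
rewrite !aw_coef_qa (aw_coef_by_succ_n n 0) /basis_mul_diag.
set c := aw_coef n.+1 0 a b; rewrite !exprS expr0.
set Q := q ^+ n; rewrite /qq.
by field; rewrite -/(qq t) /Q; nonzero.
Qed.

End Coefficients.

Lemma PnE_ext n p x x0 x1 :
  Pn t n x x0 x1 = \sum_(k < (n.+1 + p)%N) aw_coef n k (x0 ^+ 2) (x1 ^+ 2) * aw_basis k x.
Proof.
rewrite PnE; elim: p => [|p ->]; first by rewrite addn0.
by rewrite addnS [RHS]big_ord_recr /= aw_coef_eq0 ?mul0r ?addr0 // ltnS leq_addr.
Qed.

Lemma aw_basis_mul u k x : x != 0 ->
  (t ^+ 2 * x + u) * (t ^+ 2 + x * u) / (t ^+ 2 * x) * aw_basis k x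
  = basis_mul_diag u (q ^+ k) * aw_basis k x + basis_mul_next u (q ^+ k) * aw_basis k.+1 x.
Proof.
move=> x_neq0; rewrite /aw_basis /basis_mul_diag /basis_mul_next !qpochS.
by field; rewrite x_neq0 expf_neq0 ?qq_neq0 ?t_neq0.
Qed.

Section Contiguity.
Variables x0 x1 : C.
Hypotheses (x0_neq0 : x0 != 0) (x1_neq0 : x1 != 0) (gen : qgeneric (x0 ^+ 2) (x1 ^+ 2)).

Lemma Pn_raise_x0 m x :
  Pn t m.+1 x (t ^+ 2 * x0) x1 = Pn t m.+1 x x0 x1 + lam t m.+1 x0 x1 * Pn t m x x0 x1.
Proof.
have x0q : (t ^+ 2 * x0) ^+ 2 = q * x0 ^+ 2 by rewrite exprMn -exprM.
rewrite (PnE_ext m 1) addn1 !PnE x0q lamE big_distrr -big_split; apply: eq_bigr => k _ /=.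
rewrite aw_coef_raise ?expf_neq0 //.
by rewrite mulrDl [_ * (_ * aw_basis k x)]mulrA.
Qed.

Lemma Pn_lower_x0 m x : x != 0 ->
  (t ^+ 2 * x + x0 ^+ 2) * (t ^+ 2 + x * x0 ^+ 2) / (t ^+ 2 * x) * Pn t m.+1 x (t ^- 2 * x0) x1
  = x0 ^+ 2 * (Pn t m.+2 x x0 x1
      + gam t m.+1 (t ^- 2 * x0) x1 / lam t m.+1 (t ^- 2 * x0) x1 * Pn t m.+1 x x0 x1).
Proof.
move=> x_neq0; set a := x0 ^+ 2 / q.
have x0a : x0 ^+ 2 = q * a by rewrite mulrC divfK ?qq_neq0.
have ya : (t ^- 2 * x0) ^+ 2 = a by rewrite exprMn exprVn -exprM mulrC.
have a_neq0 : a != 0 by rewrite mulf_neq0 ?invr_eq0 ?qq_neq0 ?expf_neq0.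
have a_gen : qgeneric a (x1 ^+ 2) by apply: qgeneric_divq.
have x1sq_neq0 : x1 ^+ 2 != 0 by rewrite expf_neq0.
rewrite (gam_div_lam a_neq0 x1sq_neq0 a_gen m ya erefl) (PnE_ext _ 1) addn1.
rewrite (PnE m.+2) (PnE_ext m.+1 1) addn1 ya x0a.
set g := _ * (1 - q ^+ m.+1 / a) ^+ 2 / _; clearbody a.
pose F k := aw_coef m.+1 k a (x1 ^+ 2) * basis_mul_diag (q * a) (q ^+ k).
pose G k := aw_coef m.+1 k a (x1 ^+ 2) * basis_mul_next (q * a) (q ^+ k).
pose H k := q * a * (aw_coef m.+2 k (q * a) (x1 ^+ 2) + g * aw_coef m.+1 k (q * a) (x1 ^+ 2)).
pose phi k := aw_basis k x.
transitivity (\sum_(k < m.+3) H k * phi k); last first.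
  rewrite mulrDr !mulr_sumr -big_split; apply: eq_bigr => k _.
  by rewrite /H /phi mulrDr mulrDl !mulrA.
transitivity (\sum_(k < m.+3) F k * phi k + \sum_(k < m.+3) G k * phi k.+1).
  rewrite mulr_sumr -big_split; apply: eq_bigr => k _.
  by rewrite /F /G /phi mulrCA aw_basis_mul // mulrDr !mulrA.
apply: sum_shift_combine => [|k|].
- exact: aw_coef0_lower.
- exact: aw_coef_lower.
- by rewrite /G aw_coef_eq0 ?mul0r.
Qed.

End Contiguity.

Lemma Pn_sym n x y z : Pn t n x y z = Pn t n x z y.
Proof.
rewrite !PnE; apply: eq_bigr => k _; congr (_ * _).
by rewrite /aw_coef [z ^+ 2 * _]mulrC [qpoch q n * _ * _]mulrAC [qpoch q k * _ * _ * _]mulrAC.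
Qed.

Lemma gam_sym n y z : gam t n y z = gam t n z y.
Proof. by rewrite /gam [z ^+ 2 * _]mulrC [X in X / _ = _]mulrAC. Qed.

Lemma A4_Pbar_swap nu n x x0 x1 :
  A4 t (Pbar t nu n) x x0 x1 = A2 t (Pbar t (fun m y z => nu m z y) n) x x1 x0.
Proof. by rewrite /A4 /A2 /G0 /eth /ethinv /Pbar /= !(Pn_sym _ _ x0). Qed.

Lemma A2_Pbar nu n x x0 x1 :
  (forall m y z, nu m y z != 0) -> (0 < n)%N -> x != 0 -> x0 != 0 -> x1 != 0 ->
  qgeneric (x0 ^+ 2) (x1 ^+ 2) ->
  A2 t (Pbar t nu n) x x0 x1 =
    'i%C * t ^-1 / (1 - x0 ^+ 2) *
    ( x0 ^+ 2 * nu n (t ^- 2 * x0) x1 / nu n.+1 x0 x1 * Pbar t nu n.+1 x x0 x1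
      - nu n (t ^+ 2 * x0) x1 / nu n.-1 x0 x1 * lam t n x0 x1 * Pbar t nu n.-1 x x0 x1
      + (x0 ^+ 2 * (gam t n (t ^- 2 * x0) x1 / lam t n (t ^- 2 * x0) x1)
           * (nu n (t ^- 2 * x0) x1 / nu n x0 x1)
         - nu n (t ^+ 2 * x0) x1 / nu n x0 x1) * Pbar t nu n x x0 x1 ).
Proof.
move=> nu_neq0 + x_neq0 x0_neq0 x1_neq0 gen; case: n => [//|m] _.
have x0_sub1 : 1 - x0 ^+ 2 != 0.
  by have [+ _ _] := gen 0%N; rewrite eq_sym -subr_eq0 expr0.
have regroup (c d e u v : C) : c / (d * e) * (u * v) = u / e * (c / d * v).
  by rewrite invfM; ring.
rewrite /A2 /G0 /eth /ethinv /Pbar /= regroup.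
rewrite Pn_lower_x0 // Pn_raise_x0 //.
set g := gam _ _ _ _ / _.
by field; rewrite !nu_neq0 x0_sub1 t_neq0.
Qed.

End AskeyWilson.

Theorem mainTheorem4 (R : realType) (t : R[i]) (nu : nat -> R[i] -> R[i] -> R[i]) :
  0 < `|t ^+ 4| < 1 ->
  (forall (m : nat) (a b : R[i]), nu m a b != 0) ->
  forall (n : nat) (x x0 x1 : R[i]),
    (1 <= n)%N -> x != 0 -> x0 != 0 -> x1 != 0 -> generic t x0 x1 ->
    A2 t (Pbar t nu n) x x0 x1 =
      'i%C * t ^-1 / (1 - x0 ^+ 2) *
      ( x0 ^+ 2 * nu n (t ^- 2 * x0) x1 / nu n.+1 x0 x1 * Pbar t nu n.+1 x x0 x1
        - nu n (t ^+ 2 * x0) x1 / nu n.-1 x0 x1 * lam t n x0 x1 * Pbar t nu n.-1 x x0 x1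
        + (x0 ^+ 2 * (gam t n (t ^- 2 * x0) x1 / lam t n (t ^- 2 * x0) x1)
             * (nu n (t ^- 2 * x0) x1 / nu n x0 x1)
           - nu n (t ^+ 2 * x0) x1 / nu n x0 x1) * Pbar t nu n x x0 x1 )
    /\
    A4 t (Pbar t nu n) x x0 x1 =
      'i%C * t ^-1 / (1 - x1 ^+ 2) *
      ( x1 ^+ 2 * nu n x0 (t ^- 2 * x1) / nu n.+1 x0 x1 * Pbar t nu n.+1 x x0 x1
        - nu n x0 (t ^+ 2 * x1) / nu n.-1 x0 x1 * lam t n x1 x0 * Pbar t nu n.-1 x x0 x1
        + (x1 ^+ 2 * (gam t n x0 (t ^- 2 * x1) / lam t n (t ^- 2 * x1) x0)
             * (nu n x0 (t ^- 2 * x1) / nu n x0 x1)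
           - nu n x0 (t ^+ 2 * x1) / nu n x0 x1) * Pbar t nu n x x0 x1 ).
Proof.
move=> ht nu_neq0 n x x0 x1 n_gt0 x_neq0 x0_neq0 x1_neq0 /qgeneric_sqr gen.
split; first exact: A2_Pbar.
have gen' := qgeneric_sym gen.
rewrite A4_Pbar_swap A2_Pbar //=.
by rewrite /Pbar !(Pn_sym _ _ _ x1) (gam_sym _ _ (t ^- 2 * x1)).
Qed.
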